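(* Let $m\ge0$ be an integer and write $s_n=s_n^{(1,m+2)}$. Then for all $n\ge0$, \[ s_n^2=\delta_{n,0}+s_{n-1}^2+s_{n-m-2}^2+2\sum_{l=m+2}^n P_{l-1}^{\{-2,-1,m\}}s_{n-l}^2 . \]
   Context: For positive integers $p<q$, $s_n^{(p,q)}$ is defined by $s_n^{(p,q)}=\delta_{0,n}+s_{n-p}^{(p,q)}+s_{n-q}^{(p,q)}$ for $n\ge0$ and $s_n^{(p,q)}=0$ for $n<0$. $\delta_{i,j}$ is $1$ if $i=j$ and $0$ otherwise. For a finite set $W$ of integers, $P_n^W$ is the number of permutations $\pi$ of $\{1,\dots,n\}$ with $\pi(i)-i\in W$ for all $i$ (the permanent of the $n\times n$ $(0,1)$ Toeplitz matrix whose $(i,j)$ entry is $1$ iff $j-i\in W$), with $P_0^W=1$. Empty sums are $0$. *)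

From mathcomp Require Import all_boot all_order all_algebra all_fingroup.
Set Implicit Arguments. Unset Strict Implicit. Unset Printing Implicit Defensive.
Import GRing.Theory Num.Theory.

(* s_n^{(p,q)} on natural indices, computed by fuel-bounded recursion:
   s_n = [n = 0] + s_{n-p} + s_{n-q}, where a term s_{n-r} with n < r is 0.
   Fuel n.+1 suffices whenever p, q >= 1 (each step decreases n). *)
Fixpoint s_aux (p q k n : nat) : nat :=
  match k with
  | 0 => 0
  | k'.+1 => (n == 0) + (if p <= n then s_aux p q k' (n - p) else 0)
                      + (if q <= n then s_aux p q k' (n - q) else 0)
  end.

Definition s_nat (p q n : nat) : nat := s_aux p q n.+1 n.

Definition s (p q : nat) (n : int) : nat :=
  match n with Posz k => s_nat p q k | Negz _ => 0 end.

(* P_n^W: number of permutations pi of {1..n} (here indexed 0..n-1; the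
   difference pi(i) - i is unchanged) with pi(i) - i in W for all i. *)
Definition Pperm (W : seq int) (n : nat) : nat :=
  #|[set sigma : 'S_n | [forall i : 'I_n,
        ((sigma i : nat)%:Z - (i : nat)%:Z)%R \in W]]|.

From mathcomp Require Import all_boot all_order all_algebra all_fingroup.
From mathcomp Require Import zify.
Set Implicit Arguments. Unset Strict Implicit. Unset Printing Implicit Defensive.

(* Write S n for s_n^{(1,m+2)}.  Since S (n + 1) = S n + S (n + 1 - (m + 2)), squaring
   reduces the theorem to  S r * S (r + m + 1) = \sum_L P_{L+m+1} * S (r - L)^2.
   In a permutation of {0, ..., N-1} with steps -2, -1 and +m, the position N - m - 1 (the
   top) must go to N - 1, and every cut between x - 1 and x is crossed upwards as often as
   downwards, hence at most twice; this makes the up-steps just below the top rigid.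
   Let nfree m N j count these permutations with no up-step at the j - 1 positions below the
   top.  Enlarging the window by one position loses exactly the permutations with an up-step
   at the new position; above the top such a permutation is forced, and collapsing that part
   removes j points and is a bijection onto the instance of size N - j and window m + 2 - j.
   The resulting recursion in the window is the recursion of S r * S (r + g) in g, which
   yields the convolution identity by induction on r and g; for g = m + 1 the window is
   empty and nfree counts P_N. *)

Section PermNat.
Variable N : nat.
Implicit Types s t : 'S_N.

Definition perm_nat s (i : nat) : nat :=
  if insub i is Some j then nat_of_ord (s j) else i.

Lemma perm_natO s i (lt_iN : i < N) : perm_nat s i = s (Ordinal lt_iN).
Proof. by rewrite /perm_nat insubT. Qed.

Lemma perm_natE s (i : 'I_N) : perm_nat s i = s i.
Proof. by case: i => i lt_iN; rewrite perm_natO. Qed.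

Lemma perm_nat_lt s i : i < N -> perm_nat s i < N.
Proof. by move=> lt_iN; rewrite perm_natO. Qed.

Lemma perm_nat_inj s i j : i < N -> j < N -> perm_nat s i = perm_nat s j -> i = j.
Proof. by move=> lt_iN lt_jN; rewrite !perm_natO => /val_inj/perm_inj[]. Qed.

Lemma perm_nat_onto s y : y < N -> exists i, i < N /\ perm_nat s i = y.
Proof.
move=> lt_yN; exists ((s^-1)%g (Ordinal lt_yN)).
by rewrite ltn_ord perm_natE permKV.
Qed.

Lemma eq_perm_nat s t : (forall i, i < N -> perm_nat s i = perm_nat t i) -> s = t.
Proof.
by move=> eq_st; apply/permP => i; apply: val_inj; rewrite /= -!perm_natE eq_st.
Qed.

Definition perm_of_nat (F : nat -> nat) : 'S_N :=
  if injectiveP (fun i : 'I_N => insubd i (F i)) is ReflectT inj_f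
  then perm inj_f else 1%g.

Lemma perm_of_natE (F : nat -> nat) :
  (forall i, i < N -> F i < N) ->
  (forall i j, i < N -> j < N -> F i = F j -> i = j) ->
  forall i, i < N -> perm_nat (perm_of_nat F) i = F i.
Proof.
move=> F_lt F_inj.
have inj_f : injective (fun i : 'I_N => insubd i (F i)).
  move=> i j /(congr1 val); rewrite !val_insubd !F_lt ?ltn_ord // => eq_ij.
  exact/val_inj/(F_inj _ _ (ltn_ord i) (ltn_ord j)).
move=> i lt_iN; rewrite perm_natO /perm_of_nat.
case: injectiveP => [inj_f'|/(_ inj_f)//].
by rewrite permE val_insubd F_lt.
Qed.

Lemma card_gt0_ord (P : pred nat) :
  0 < #|[set i : 'I_N | P i]| <-> exists a, a < N /\ P a.
Proof.
split=> [/card_gt0P[i]|[a [lt_aN Pa]]]; first by rewrite inE => Pi; exists i.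
by apply/card_gt0P; exists (Ordinal lt_aN); rewrite inE.
Qed.

Lemma card_gt1_ord (P : pred nat) :
  1 < #|[set i : 'I_N | P i]| <->
  exists a b, a <> b /\ a < N /\ b < N /\ P a /\ P b.
Proof.
split=> [/card_gt1P[i [j [+ + neq_ij]]]|[a [b [neq_ab [lt_aN [lt_bN [Pa Pb]]]]]]].
  rewrite !inE => Pi Pj; exists i, j; rewrite !ltn_ord.
  by split=> // eq_ij; move/eqP: neq_ij; apply; apply: val_inj.
apply/card_gt1P; exists (Ordinal lt_aN), (Ordinal lt_bN); rewrite !inE.
by split=> //; apply/eqP => -[].
Qed.

Lemma card_cross s x :
  #|[set i : 'I_N | i < x <= perm_nat s i]| = #|[set i : 'I_N | perm_nat s i < x <= i]|.
Proof.
set L := [set i : 'I_N | i < x]; set S := [set i : 'I_N | perm_nat s i < x].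
have card_S : #|S| = #|L|.
  have -> : S = s @^-1: L by apply/setP => i; rewrite !inE perm_natE.
  by rewrite card_preimset //; apply: perm_inj.
have up : #|[set i : 'I_N | i < x <= perm_nat s i]| = #|[predD L & S]|.
  by apply: eq_card => i; rewrite !inE -leqNgt andbC.
have down : #|[set i : 'I_N | perm_nat s i < x <= i]| = #|[predD S & L]|.
  by apply: eq_card => i; rewrite !inE -leqNgt andbC.
have LS : #|[predI L & S]| = #|[predI S & L]|.
  by apply: eq_card => i; rewrite !inE andbC.
have := cardID S L; have := cardID L S; rewrite up down; lia.
Qed.

Lemma cross_up_down s x :
  (exists a, a < N /\ a < x <= perm_nat s a) <->
  (exists b, b < N /\ perm_nat s b < x <= b).
Proof.
rewrite -(card_gt0_ord (fun i => i < x <= perm_nat s i)).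
by rewrite -(card_gt0_ord (fun i => perm_nat s i < x <= i)) card_cross.
Qed.

Lemma cross_up_down2 s x :
  (exists a1 a2, a1 <> a2 /\ a1 < N /\ a2 < N /\
     a1 < x <= perm_nat s a1 /\ a2 < x <= perm_nat s a2) <->
  (exists b1 b2, b1 <> b2 /\ b1 < N /\ b2 < N /\
     perm_nat s b1 < x <= b1 /\ perm_nat s b2 < x <= b2).
Proof.
rewrite -(card_gt1_ord (fun i => i < x <= perm_nat s i)).
by rewrite -(card_gt1_ord (fun i => perm_nat s i < x <= i)) card_cross.
Qed.

End PermNat.

Section Admissible.
Variables m N : nat.
Implicit Types s : 'S_N.

Definition admissible s := forall i, i < N ->
  perm_nat s i + 2 = i \/ perm_nat s i + 1 = i \/ perm_nat s i = i + m.

Definition admissibleb s := [forall i : 'I_N,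
  [|| perm_nat s i + 2 == i, perm_nat s i + 1 == i | perm_nat s i == i + m]].

Lemma admissibleP s : reflect (admissible s) (admissibleb s).
Proof.
apply: (iffP forallP) => [adm i lt_iN|adm i].
  by move: (adm (Ordinal lt_iN)) => /= /or3P[]/eqP; auto.
by case: (adm i (ltn_ord i)) => [|[|]] ->; rewrite eqxx ?orbT.
Qed.

Definition up_free j s := forall i,
  N - m - 1 < i + j -> i < N - m - 1 -> perm_nat s i <> i + m.

Definition up_freeb j s := [forall i : 'I_N,
  (N - m - 1 < i + j) && (i < N - m - 1) ==> (perm_nat s i != i + m)].

Lemma up_freeP j s : reflect (up_free j s) (up_freeb j s).
Proof.
apply: (iffP forallP) => [free i lt_ti lt_it|free i].
  have lt_iN : i < N by lia.
  by apply/eqP; move: (free (Ordinal lt_iN)) => /=; rewrite lt_ti lt_it.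
by apply/implyP => /andP[lt_ti lt_it]; apply/eqP/free.
Qed.

Lemma up_freeS j s : 0 < j -> up_free j.+1 s <->
  up_free j s /\ ~ (j <= N - m - 1 /\ perm_nat s (N - m - 1 - j) = N - m - 1 - j + m).
Proof.
move=> j_gt0; split=> [free|[free pin] i lt_ti lt_it up].
  split=> [i lt_ti lt_it|[le_jt pin]]; first by apply: free; lia.
  by apply: (free (N - m - 1 - j)); lia.
case: (ltnP (N - m - 1) (i + j)) => [|le_it]; first by move/free/(_ lt_it); apply.
have i_eq : i = N - m - 1 - j by lia.
by apply: pin; split; [lia | rewrite -i_eq].
Qed.

Variable s : 'S_N.
Hypothesis adm : admissible s.

Lemma admissible_top : m + 1 <= N -> perm_nat s (N - m - 1) = N - 1.
Proof.
move=> le_mN; have [i [lt_iN si]] := perm_nat_onto s (ltac:(lia) : N - 1 < N).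
by have := adm lt_iN; rewrite si => ?; have -> : N - m - 1 = i by lia.
Qed.

Lemma down_cross_le x b : b < N -> perm_nat s b < x <= b -> b <= x + 1.
Proof. by move=> lt_bN; have := adm lt_bN; lia. Qed.

Lemma up_step_lt_top i : i < N -> perm_nat s i = i + m -> i <= N - m - 1.
Proof. by move=> lt_iN; have := perm_nat_lt s lt_iN; lia. Qed.

Lemma not_up_free_top : m + 2 <= N -> ~ up_free (m + 2) s.
Proof.
move=> le_mN free.
have [a [lt_aN cut_up]] : exists a, a < N /\ a < N - m - 2 <= perm_nat s a.
  apply/cross_up_down; exists (N - m - 2).
  case: (adm (ltac:(lia) : N - m - 2 < N)) => [|[|up]]; try lia.
  by exfalso; apply: (free (N - m - 2)); lia.
by case: (adm lt_aN) => [|[|up]]; [lia | lia | apply: (free a); lia].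
Qed.

Lemma up_free_tail j : up_free j s -> j <= m + 1 ->
  forall i, N - j < i -> i < N -> perm_nat s i = i - 1.
Proof.
move=> free le_jm i lt_ji lt_iN.
have no_up := up_step_lt_top lt_iN.
case: (adm lt_iN) => [down2|[|/no_up]]; [|lia|lia].
case: (eqVneq i (N - m)) => [i_eq|i_neq].
  have [a [lt_aN cut_up]] : exists a, a < N /\ a < N - m - 1 <= perm_nat s a.
    by apply/cross_up_down; exists i; lia.
  by case: (adm lt_aN) => [|[|up]]; [lia | lia | exfalso; apply: (free a); lia].
have no_up' := up_step_lt_top (ltac:(lia) : i - 1 < N).
have [a1 [a2 [neq_a [lt_a1N [lt_a2N [cut1 cut2]]]]]] :
    exists a1 a2, a1 <> a2 /\ a1 < N /\ a2 < N /\
      a1 < i - 1 <= perm_nat s a1 /\ a2 < i - 1 <= perm_nat s a2.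
  apply/cross_up_down2; exists (i - 1), i.
  by case: (adm (ltac:(lia) : i - 1 < N)) => [|[|/no_up']]; lia.
have up1 : perm_nat s a1 = a1 + m by have := adm lt_a1N; lia.
have up2 : perm_nat s a2 = a2 + m by have := adm lt_a2N; lia.
have le_a1t := up_step_lt_top lt_a1N up1; have le_a2t := up_step_lt_top lt_a2N up2.
case: (ltnP a1 (N - m - 1)) => [lt_a1t|ge_a1t]; first by exfalso; apply: (free a1); lia.
case: (ltnP a2 (N - m - 1)) => [lt_a2t|ge_a2t]; first by exfalso; apply: (free a2); lia.
lia.
Qed.

Lemma up_free_image_low j : up_free j s -> j <= m + 1 ->
  forall i, i <= N - j -> i < N -> perm_nat s i < N - j \/ perm_nat s i = N - 1.
Proof.
move=> free le_jm i le_ij lt_iN.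
have lt_si := perm_nat_lt s lt_iN.
case: (ltnP (perm_nat s i) (N - j)) => [|ge_si]; first by left.
case: (eqVneq (perm_nat s i) (N - 1)) => [|neq_si]; first by right.
have tail := up_free_tail free le_jm (ltac:(lia) : N - j < perm_nat s i + 1) ltac:(lia).
have := @perm_nat_inj _ s i (perm_nat s i + 1) lt_iN ltac:(lia); rewrite tail; lia.
Qed.

Lemma up_step_below_top i u : i < u < N - m - 1 ->
  perm_nat s i = i + m -> perm_nat s u = u + m -> i + m + 2 <= N - m - 1.
Proof.
move=> lt_iut up_i up_u; rewrite leqNgt; apply/negP => lt_ti.
have top := admissible_top ltac:(lia).
case: (ltnP u (N - m - 2)) => lt_ut.
  have [b1 [b2 [neq_b [lt_b1N [lt_b2N [cut1 cut2]]]]]] :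
      exists b1 b2, b1 <> b2 /\ b1 < N /\ b2 < N /\
        perm_nat s b1 < N - m - 2 <= b1 /\ perm_nat s b2 < N - m - 2 <= b2.
    by apply/cross_up_down2; exists i, u; lia.
  have le_b1 := down_cross_le lt_b1N cut1; have le_b2 := down_cross_le lt_b2N cut2.
  case: (eqVneq b1 (N - m - 1)) => [b1_top|]; first by rewrite b1_top top in cut1; lia.
  case: (eqVneq b2 (N - m - 1)) => [b2_top|]; first by rewrite b2_top top in cut2; lia.
  lia.
have [b [lt_bN cut]] : exists b, b < N /\ perm_nat s b < N - m - 2 <= b.
  by apply/cross_up_down; exists i; lia.
have le_b := down_cross_le lt_bN cut.
case: (eqVneq b (N - m - 1)) => [b_top|b_ntop]; first by rewrite b_top top in cut; lia.
have b_u : b = u by lia.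
by rewrite b_u up_u in cut; lia.
Qed.

Section Pinned.
Variable j : nat.
Hypotheses (free : up_free j s) (j_gt0 : 0 < j) (le_jt : j <= N - m - 1).
Hypothesis pin : perm_nat s (N - m - 1 - j) = N - m - 1 - j + m.

Lemma pinned_block i : N - m - 1 < i <= N - j -> perm_nat s i = i - 2.
Proof.
move=> /andP[lt_ti le_ij].
have lt_iN : i < N by lia.
have top := admissible_top ltac:(lia).
have no_up := up_step_lt_top lt_iN.
case: (adm lt_iN) => [|[down1|/no_up]]; [lia| |lia].
case: (eqVneq i (N - m)) => [i_eq|i_neq].
  have [b [lt_bN cut]] : exists b, b < N /\ perm_nat s b < N - m - 1 <= b.
    by apply/cross_up_down; exists (N - m - 1 - j); lia.
  have le_b := down_cross_le lt_bN cut.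
  case: (eqVneq b (N - m - 1)) => [b_top|b_ntop]; first by rewrite b_top top in cut; lia.
  have b_i : b = i by lia.
  by rewrite b_i in cut; lia.
have [b1 [b2 [neq_b [lt_b1N [lt_b2N [cut1 cut2]]]]]] :
    exists b1 b2, b1 <> b2 /\ b1 < N /\ b2 < N /\
      perm_nat s b1 < i - 1 <= b1 /\ perm_nat s b2 < i - 1 <= b2.
  by apply/cross_up_down2; exists (N - m - 1 - j), (N - m - 1); lia.
have le_b1 := down_cross_le lt_b1N cut1; have le_b2 := down_cross_le lt_b2N cut2.
case: (eqVneq b1 i) => [b1_i|]; first by rewrite b1_i in cut1; lia.
case: (eqVneq b2 i) => [b2_i|]; first by rewrite b2_i in cut2; lia.
lia.
Qed.

Lemma pinned_image_low i : i < N - m - 1 ->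
  perm_nat s i < N - m - 2 \/ perm_nat s i = N - j - 1.
Proof.
move=> lt_it; case: (adm (ltac:(lia) : i < N)) => [|[|up]]; [lia|lia|].
case: (ltngtP i (N - m - 1 - j)) => [lt_iu|gt_iu|->]; last by right; lia.
  by have := up_step_below_top (ltac:(lia) : i < N - m - 1 - j < N - m - 1) up pin; lia.
by exfalso; apply: (free (i := i)); lia.
Qed.

End Pinned.
End Admissible.

Definition free_perms m N j :=
  [set s : 'S_N | admissibleb m s && up_freeb m j s].

Definition nfree m N j := #|free_perms m N j|.

Definition pinned_perms m N j := [set s : 'S_N | [&& admissibleb m s, up_freeb m j s,
  j <= N - m - 1 & perm_nat s (N - m - 1 - j) == N - m - 1 - j + m]].

Lemma free_permsP m N j (s : 'S_N) :
  reflect (admissible m s /\ up_free m j s) (s \in free_perms m N j).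
Proof.
rewrite inE; apply: (iffP andP) => -[].
  by move=> /admissibleP adm /up_freeP free.
by move=> /admissibleP adm /up_freeP free.
Qed.

Lemma pinned_permsP m N j (s : 'S_N) :
  reflect [/\ admissible m s, up_free m j s, j <= N - m - 1
            & perm_nat s (N - m - 1 - j) = N - m - 1 - j + m]
          (s \in pinned_perms m N j).
Proof.
rewrite inE; apply: (iffP and4P) => -[].
  by move=> /admissibleP adm /up_freeP free le_jt /eqP pin.
by move=> /admissibleP adm /up_freeP free le_jt /eqP pin.
Qed.

Lemma nfree_split m N j : 0 < j ->
  nfree m N j = nfree m N j.+1 + #|pinned_perms m N j|.
Proof.
move=> j_gt0; pose pin := [pred s : 'S_N |
  (j <= N - m - 1) && (perm_nat s (N - m - 1 - j) == N - m - 1 - j + m)].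
rewrite /nfree -(cardID pin (free_perms m N j)) addnC; congr (_ + _).
  apply: eq_card => s; rewrite !inE; case: (admissibleb m s); rewrite ?andbF //=.
  apply/andP/up_freeP => [[/negP unpin /up_freeP free]|/(up_freeS _ _ j_gt0)[free unpin]].
    apply/(up_freeS _ _ j_gt0); split=> // -[le_jt pin_s].
    by apply: unpin; rewrite le_jt pin_s eqxx.
  by split; [apply/negP => /andP[le_jt /eqP pin_s]; apply: unpin | apply/up_freeP].
by apply: eq_card => s; rewrite !inE -andbA.
Qed.

Lemma nfree_top m N : m + 2 <= N -> nfree m N (m + 2) = 0.
Proof.
move=> le_mN; apply/eqP; rewrite cards_eq0; apply/eqP/setP => s.
by rewrite in_set0; apply/free_permsP => -[adm]; apply: not_up_free_top.
Qed.

Lemma nfree_min m j : nfree m (m + 1) j = 1.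
Proof.
pose F i := if i == 0 then m else i - 1.
have F_lt i : i < m + 1 -> F i < m + 1 by rewrite /F; case: eqP; lia.
have F_inj i k : i < m + 1 -> k < m + 1 -> F i = F k -> i = k.
  by rewrite /F; case: eqP; case: eqP; lia.
have permE := perm_of_natE F_lt F_inj.
rewrite /nfree (_ : free_perms m (m + 1) j = [set perm_of_nat (m + 1) F]) ?cards1 //.
apply/setP => s; rewrite in_set1; apply/free_permsP/eqP => [[adm _]|->].
  have free : up_free m (m + 1) s by move=> i; lia.
  apply: eq_perm_nat => i lt_im; rewrite permE // /F.
  case: eqP => [->|i_neq]; first by have := adm 0 (ltac:(lia) : 0 < m + 1); lia.
  by apply: (up_free_tail adm free); lia.
by split=> [i lt_im|i]; [rewrite permE // /F; case: eqP | ]; lia.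
Qed.

Lemma card_bij_on (aT bT : finType) (A : {set aT}) (B : {set bT})
    (f : aT -> bT) (g : bT -> aT) :
  {in A, forall x, f x \in B} -> {in B, forall y, g y \in A} ->
  {in A, cancel f g} -> {in B, cancel g f} -> #|A| = #|B|.
Proof.
move=> fAB gBA fK gK; rewrite -(card_in_imset (can_in_inj fK)).
apply: eq_card => y; apply/imsetP/idP => [[x Ax ->]|By]; first exact: fAB.
by exists (g y); rewrite ?gK ?gBA.
Qed.

Section Contraction.
Variables m N j : nat.
Hypotheses (j_gt0 : 0 < j) (le_jm : j <= m + 1) (le_jt : j <= N - m - 1).

Definition contractF (s : 'S_N) i := if i < N - m - 1 then perm_nat s i else i - 1.

Definition contract (s : 'S_N) : 'S_(N - j) := perm_of_nat (N - j) (contractF s).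

Definition expandF (s : 'S_(N - j)) i :=
  if i < N - m - 1 then perm_nat s i else if i == N - m - 1 then N - 1
  else if i <= N - j then i - 2 else i - 1.

Definition expand (s : 'S_(N - j)) : 'S_N := perm_of_nat N (expandF s).

Lemma expandF_spec s i :
  [\/ i < N - m - 1 /\ expandF s i = perm_nat s i,
      i = N - m - 1 /\ expandF s i = N - 1,
      N - m - 1 < i <= N - j /\ expandF s i = i - 2
    | N - j < i /\ expandF s i = i - 1].
Proof.
rewrite /expandF; case: ltnP => [|ge_it]; first by constructor 1.
case: eqP => [|ne_it]; first by constructor 2.
by case: (leqP i (N - j)) => ?; [constructor 3 | constructor 4]; split=> //; lia.
Qed.

Section Contract.
Variable s : 'S_N.
Hypothesis pinned_s : s \in pinned_perms m N j.

Lemma contractE i : i < N - j -> perm_nat (contract s) i = contractF s i.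
Proof.
case/pinned_permsP: pinned_s => adm free _ pin.
have low := pinned_image_low adm free j_gt0 le_jt pin.
apply: perm_of_natE => [{}i lt_i|{}i k lt_i lt_k]; rewrite /contractF.
  by case: (ltnP i (N - m - 1)) => [lt_it|]; [have := low _ lt_it|]; lia.
case: (ltnP i (N - m - 1)) => [lt_it|ge_it]; case: (ltnP k (N - m - 1)) => [lt_kt|ge_kt];
  try (have := low _ lt_it); try (have := low _ lt_kt); try lia.
by move=> _ _; apply: perm_nat_inj; lia.
Qed.

Lemma contract_free : contract s \in free_perms m (N - j) (m + 2 - j).
Proof.
case/pinned_permsP: (pinned_s) => adm free _ pin.
have low := pinned_image_low adm free j_gt0 le_jt pin.
apply/free_permsP; split=> [i lt_i|i lt_ti lt_it].
  rewrite contractE // /contractF.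
  by case: (ltnP i (N - m - 1)) => [lt_it|]; [have := adm i (ltac:(lia) : i < N) | ]; lia.
rewrite contractE /contractF; last lia.
by case: (ltnP i (N - m - 1)) => [lt_it'|]; [have := low _ lt_it'|]; lia.
Qed.

End Contract.

Section Expand.
Variable s : 'S_(N - j).
Hypothesis free_s : s \in free_perms m (N - j) (m + 2 - j).

Lemma free_image_low i : i < N - m - 1 ->
  perm_nat s i < N - m - 2 \/ perm_nat s i = N - j - 1.
Proof.
case/free_permsP: free_s => adm free lt_it.
have := up_free_image_low adm free (ltac:(lia) : m + 2 - j <= m + 1)
  (ltac:(lia) : i <= N - j - (m + 2 - j)) (ltac:(lia) : i < N - j); lia.
Qed.

Lemma expandE i : i < N -> perm_nat (expand s) i = expandF s i.
Proof.
have low := free_image_low.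
apply: perm_of_natE => [{}i lt_i|{}i k lt_i lt_k].
  case: (expandF_spec s i) => -[lt_it ->] //; try lia.
  by have := perm_nat_lt s (ltac:(lia) : i < N - j); lia.
case: (expandF_spec s i) => -[lt_it ->]; case: (expandF_spec s k) => -[lt_kt ->];
  try (have := low _ lt_it); try (have := low _ lt_kt); try lia.
by move=> _ _; apply: perm_nat_inj; lia.
Qed.

Lemma expand_pinned : expand s \in pinned_perms m N j.
Proof.
case/free_permsP: (free_s) => adm free; have low := free_image_low.
have top := admissible_top adm (ltac:(lia) : m + 1 <= N - j).
apply/pinned_permsP; split=> //.
- move=> i lt_iN; rewrite expandE //.
  case: (expandF_spec s i) => -[lt_it ->]; try lia.
  by apply: adm; lia.
- move=> i lt_ti lt_it; rewrite expandE; last lia.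
  by case: (expandF_spec s i) => -[? ->]; try (have := low _ lt_it); lia.
- rewrite expandE; last lia.
  case: (expandF_spec s (N - m - 1 - j)) => -[? ->]; try lia.
  by rewrite (_ : N - m - 1 - j = N - j - m - 1) ?top; lia.
Qed.

Lemma expandK : contract (expand s) = s.
Proof.
case/free_permsP: (free_s) => adm free.
apply: eq_perm_nat => i lt_i; rewrite contractE ?expand_pinned // /contractF.
case: (ltnP i (N - m - 1)) => [lt_it|ge_it].
  by rewrite expandE ?/expandF ?lt_it //; lia.
by rewrite (up_free_tail adm free) //; lia.
Qed.

End Expand.

Lemma contractK s : s \in pinned_perms m N j -> expand (contract s) = s.
Proof.
move=> pinned_s; have /pinned_permsP[adm free _ pin] := pinned_s.
apply: eq_perm_nat => i lt_iN; rewrite expandE ?contract_free //.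
case: (expandF_spec (contract s) i) => -[lt_it ->].
- by rewrite contractE ?/contractF ?lt_it //; lia.
- by rewrite lt_it admissible_top //; lia.
- by rewrite (pinned_block adm j_gt0 le_jt pin).
- by rewrite (up_free_tail adm free) //; lia.
Qed.

Lemma card_pinned : #|pinned_perms m N j| = nfree m (N - j) (m + 2 - j).
Proof.
apply: (card_bij_on (f := contract) (g := expand)).
- exact: contract_free.
- exact: expand_pinned.
- exact: contractK.
- exact: expandK.
Qed.

End Contraction.

Section Recurrence.
Variables p q : nat.
Hypotheses (p_gt0 : 0 < p) (q_gt0 : 0 < q).

Lemma s_aux_fuel k1 k2 n : n < k1 -> n < k2 -> s_aux p q k1 n = s_aux p q k2 n.
Proof.
elim: n {-2}n (leqnn n) k1 k2 => [|n IHn] n' le_n' [|k1] [|k2] //= lt_k1 lt_k2;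
  by congr (_ + _ + _); case: ifP => // le_r; try lia; apply: IHn; lia.
Qed.

Lemma s_natE n : s_nat p q n =
  (n == 0) + (if p <= n then s_nat p q (n - p) else 0)
           + (if q <= n then s_nat p q (n - q) else 0).
Proof.
rewrite {1}/s_nat [s_aux _ _ _.+1 _]/= /s_nat.
by congr (_ + _ + _); case: ifP => // ?; apply: s_aux_fuel; lia.
Qed.

Lemma s_nat0 : s_nat p q 0 = 1.
Proof. by rewrite /s_nat /= [p <= 0]leqNgt p_gt0 [q <= 0]leqNgt q_gt0. Qed.

End Recurrence.

Lemma s_nat1S q n : 0 < q ->
  s_nat 1 q n.+1 = s_nat 1 q n + (if q <= n.+1 then s_nat 1 q (n.+1 - q) else 0).
Proof. by move=> q_gt0; rewrite s_natE //= subSS subn0. Qed.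

Lemma s_subn p q a b :
  s p q (Posz a - Posz b)%R = if b <= a then s_nat p q (a - b) else 0.
Proof.
case: leqP => [le_ba|lt_ab]; first by rewrite subzn.
have : (Posz a - Posz b < 0)%R by lia.
by case: (Posz a - Posz b)%R.
Qed.

Lemma convolution_shift (a b : nat -> nat) r k :
  \sum_(0 <= L < r.+1) (if k <= L then a (L - k) else 0) * b (r - L) =
  if k <= r then \sum_(0 <= L < (r - k).+1) a L * b (r - k - L) else 0.
Proof.
case: leqP => [le_kr|lt_rk]; last first.
  by rewrite big1_seq // => L; rewrite mem_index_iota => /andP[_ lt_L]; rewrite ifN; lia.
rewrite (big_cat_nat _ (n := k)) //=; last lia.
rewrite big1_seq ?add0n => [|L]; last by rewrite mem_index_iota => /andP[_ lt_L]; rewrite ifN; lia.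
rewrite -{1}(add0n k) big_addn (_ : r.+1 - k = (r - k).+1); last lia.
by apply: eq_bigr => L _; rewrite leq_addl addnK; congr (_ * b _); lia.
Qed.

Section Squares.
Variable m : nat.
Local Notation S := (s_nat 1 (m + 2)).

Definition weight L g := nfree m (L + m + 1) (m + 2 - g).

Lemma weight0 L : weight L 0 = (L == 0).
Proof.
rewrite /weight subn0; case: L => [|L]; first by rewrite add0n nfree_min.
by rewrite nfree_top //; lia.
Qed.

Lemma weightS L g : g < m + 1 -> weight L g.+1 =
  weight L g + (if m + 1 - g <= L then weight (L - (m + 1 - g)) (m + 1 - g) else 0).
Proof.
move=> lt_gm; rewrite /weight (_ : m + 2 - g.+1 = m + 1 - g); last lia.
rewrite nfree_split; last lia.
rewrite (_ : (m + 1 - g).+1 = m + 2 - g); last lia.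
congr (_ + _); case: leqP => [le_L|lt_L].
  by rewrite card_pinned; try lia; congr nfree; lia.
apply/eqP; rewrite cards_eq0; apply/eqP/setP => s; rewrite !inE.
by rewrite (_ : (m + 1 - g <= L + m + 1 - m - 1) = false) ?andbF //; lia.
Qed.

Lemma weight_convolution r g : g <= m + 1 ->
  \sum_(0 <= L < r.+1) weight L g * S (r - L) ^ 2 = S r * S (r + g).
Proof.
elim/ltn_ind: r g => r IHr; elim=> [|g IHg] le_gm.
  rewrite big_nat_recl // weight0 big1 => [|L _]; last by rewrite weight0.
  by rewrite subn0 mul1n addn0 addn0.
under eq_bigr => L _ do rewrite (weightS _ le_gm) mulnDl.
rewrite big_split /= IHg; last lia.
rewrite (convolution_shift (weight^~ (m + 1 - g)) (fun i => S i ^ 2)).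
rewrite [r + g.+1]addnS s_nat1S ?mulnDr; last lia.
congr (_ + _).
case: leqP => [le_r|lt_r]; last by rewrite ifN ?muln0 //; lia.
rewrite IHr; try lia.
rewrite subnK // ifT; last lia.
by rewrite mulnC; congr (_ * S _); lia.
Qed.

End Squares.

Lemma Pperm_nfree m N : Pperm [:: (-2)%R; (-1)%R; Posz m] N = nfree m N 1.
Proof.
apply: eq_card => s; rewrite !inE.
rewrite (_ : up_freeb m 1 s); last by apply/up_freeP => i; lia.
rewrite andbT; apply/forallP/admissibleP => [adm i lt_iN|adm i].
  by move: (adm (Ordinal lt_iN)); rewrite -perm_natO !inE /=; lia.
by rewrite !inE; have := adm i (ltn_ord i); rewrite perm_natE; lia.
Qed.

Lemma sum_Pperm_squares m n : m + 2 <= n.+1 ->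
  \sum_(m + 2 <= l < n.+2)
     Pperm [:: (-2)%R; (-1)%R; Posz m] (l - 1) * s_nat 1 (m + 2) (n.+1 - l) ^ 2
  = s_nat 1 (m + 2) (n.+1 - (m + 2)) * s_nat 1 (m + 2) n.
Proof.
move=> le_mn; set r := n.+1 - (m + 2).
rewrite [in s_nat _ _ n](_ : n = r + (m + 1)); last lia.
rewrite -weight_convolution // -{1}(add0n (m + 2)) big_addn.
rewrite (_ : n.+2 - (m + 2) = r.+1); last lia.
apply: eq_bigr => L _; rewrite Pperm_nfree /weight.
by congr (nfree _ _ _ * s_nat _ _ _ ^ 2); lia.
Qed.

Theorem mainTheorem6 (m n : nat) :
  (s 1 (m + 2) (Posz n)) ^ 2 =
    (n == 0) + (s 1 (m + 2) (Posz n - 1)%R) ^ 2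
    + (s 1 (m + 2) (Posz n - Posz (m + 2))%R) ^ 2
    + 2 * \sum_(m + 2 <= l < n.+1)
            Pperm [:: (-2)%R; (-1)%R; Posz m] (l - 1) * (s 1 (m + 2) (Posz (n - l))) ^ 2.
Proof.
rewrite (_ : (Posz n - 1)%R = (Posz n - Posz 1)%R) // !s_subn /=.
case: n => [|n].
  have -> : (m + 2 <= 0) = false by lia.
  by rewrite s_nat0 ?big_geq //; lia.
rewrite s_nat1S ?subSS ?subn0 /=; last lia.
case: leqP => [le_mn|lt_nm]; last by rewrite big_geq ?addn0; lia.
rewrite sum_Pperm_squares //.
by rewrite sqrnD; lia.
Qed.
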